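(* Let $D$ be a square-free integer, let $\mathbb{Z}[\sqrt{D}]$ denote the ring of integers of $\mathbb{Q}(\sqrt{D})$, and let $p$ be a prime integer which is irreducible but not prime in $\mathbb{Z}[\sqrt{D}]$. Let $z\in I_p(D)$ with $\lVert z\rVert=-p^2$. Then $A(p,z)$ has property (CZ), i.e. there exist $a,b,c\in\mathbb{Z}[\sqrt{D}]$ with $a(1-a)=bc$ such that $A(p,z)=\begin{pmatrix} a&b\\ c&1-a\end{pmatrix}\begin{pmatrix}\bar a&\bar c\\ \bar b&1-\bar a\end{pmatrix}$.
   Context: $\mathbb{Z}[\sqrt{D}]=\{a+b\sqrt{D}:a,b\in\mathbb{Z}\}$ if $D\equiv 2,3 \pmod 4$ and $\{\frac{a+b\sqrt{D}}{2}:a,b\in\mathbb{Z},a\equiv b \pmod 2\}$ if $D\equiv 1\pmod 4$. $\bar z$ denotes the conjugate and $\lVert z\rVert=z\bar z$ the norm. $I_p(D)$ is the set of all non-unit $z\in\mathbb{Z}[\sqrt{D}]$ such that $z\notin\langle p\rangle$ but there exists $m\notin\langle p\rangle$ with $zm\in\langle p\rangle$. $A(p,z)=\begin{pmatrix} p & z\\ \bar z & \lVert z\rVert/p\end{pmatrix}$. *)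

From mathcomp Require Import all_boot all_order all_algebra.
Set Implicit Arguments. Unset Strict Implicit. Unset Printing Implicit Defensive.
Import Order.TTheory GRing.Theory Num.Theory.
Local Open Scope ring_scope.

(* The ring of integers O_D of Q(sqrt D), D square-free, D <> 1.
   An element is represented by its coordinates (x, y) in the Z-basis
   {1, w}, where w = sqrt D if D = 2,3 mod 4 and w = (1 + sqrt D)/2 if
   D = 1 mod 4.  In both cases w^2 = s + t w with
     (s, t) = (D, 0)            if D <> 1 mod 4,
     (s, t) = ((D - 1)/4, 1)    if D = 1 mod 4,
   and the Galois conjugate of w is t - w. *)
Record zd := ZD { zre : int; zom : int }.

Definition d1mod4 (D : int) : bool := (D %% 4)%Z == 1.
Definition ws (D : int) : int := if d1mod4 D then ((D - 1) %/ 4)%Z else D.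
Definition wt (D : int) : int := if d1mod4 D then 1 else 0.

Definition zd_of_int (n : int) : zd := ZD n 0.
Definition zd0 : zd := ZD 0 0.
Definition zd1 : zd := ZD 1 0.
Definition zd_add (u v : zd) : zd := ZD (zre u + zre v) (zom u + zom v).
Definition zd_opp (u : zd) : zd := ZD (- zre u) (- zom u).
Definition zd_mul (D : int) (u v : zd) : zd :=
  ZD (zre u * zre v + zom u * zom v * ws D)
     (zre u * zom v + zom u * zre v + zom u * zom v * wt D).
Definition zd_conj (D : int) (u : zd) : zd := ZD (zre u + zom u * wt D) (- zom u).
(* the norm ||z|| = z * \bar z (an integer) *)
Definition zd_norm (D : int) (u : zd) : int :=
  zre u ^+ 2 + zre u * zom u * wt D - zom u ^+ 2 * ws D.

Definition squarefree_int (D : int) : Prop :=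
  forall k : nat, (1 < k)%N -> ~~ ((k%:Z ^+ 2) %| D)%Z.

Definition zd_unit (D : int) (u : zd) : Prop := exists w, zd_mul D u w = zd1.
Definition in_ideal (D : int) (a u : zd) : Prop := exists w, u = zd_mul D a w.

Definition zd_irreducible (D : int) (a : zd) : Prop :=
  a <> zd0 /\ ~ zd_unit D a /\
  forall x y, a = zd_mul D x y -> zd_unit D x \/ zd_unit D y.
Definition zd_prime (D : int) (a : zd) : Prop :=
  a <> zd0 /\ ~ zd_unit D a /\
  forall x y, in_ideal D a (zd_mul D x y) -> in_ideal D a x \/ in_ideal D a y.

Definition I_p (D : int) (p : nat) (z : zd) : Prop :=
  ~ zd_unit D z /\ ~ in_ideal D (zd_of_int p%:Z) z /\
  exists m, ~ in_ideal D (zd_of_int p%:Z) m /\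
            in_ideal D (zd_of_int p%:Z) (zd_mul D z m).

Record mat2 := Mat2 { m11 : zd; m12 : zd; m21 : zd; m22 : zd }.
Definition mat2_mul (D : int) (M N : mat2) : mat2 :=
  Mat2 (zd_add (zd_mul D (m11 M) (m11 N)) (zd_mul D (m12 M) (m21 N)))
       (zd_add (zd_mul D (m11 M) (m12 N)) (zd_mul D (m12 M) (m22 N)))
       (zd_add (zd_mul D (m21 M) (m11 N)) (zd_mul D (m22 M) (m21 N)))
       (zd_add (zd_mul D (m21 M) (m12 N)) (zd_mul D (m22 M) (m22 N))).

(* A(p,z) = [[p, z], [\bar z, ||z||/p]]  (||z||/p is exact division here) *)
Definition A_mat (D : int) (p : nat) (z : zd) : mat2 :=
  Mat2 (zd_of_int p%:Z) z (zd_conj D z) (zd_of_int (zd_norm D z %/ p%:Z)%Z).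

Definition has_CZ (D : int) (M : mat2) : Prop :=
  exists a b c : zd,
    zd_mul D a (zd_add zd1 (zd_opp a)) = zd_mul D b c /\
    M = mat2_mul D (Mat2 a b c (zd_add zd1 (zd_opp a)))
                   (Mat2 (zd_conj D a) (zd_conj D c) (zd_conj D b)
                         (zd_add zd1 (zd_opp (zd_conj D a)))).

From HB Require Import structures.
From mathcomp Require Import all_boot all_order all_algebra.
From mathcomp Require Import ring zify.
Import GRing.Theory Num.Theory.
Set Implicit Arguments. Unset Strict Implicit. Unset Printing Implicit Defensive.
Local Open Scope ring_scope.

(* Pick al in O_D with Tr(conj(z) al) = 1 - p and take a = 1 - conj(z) al,
   b = p al, c = conj(z) - p conj(al).  Every identity required by (CZ) then
   holds in any commutative ring where z conj(z) = -p^2 and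
   conj(z) al + z conj(al) = 1 - p.
   Such an al exists: al |-> Tr(conj(z) al) is Z-linear with image g Z, where
   g = gcd(Tr conj(z), Tr(conj(z) w)).  Now g divides Tr(conj(z) z) = 2 N(z)
   = -2 p^2, and g is prime to p, for otherwise, writing z = x + y w, the
   identities disc x^2 = Tr(conj(z) w)^2 + 4 s N(z) and
   disc y^2 = Tr(conj(z))^2 - 4 N(z)
   would give p | z, as p^2 does not divide disc by square-freeness (in the
   remaining case p = 2, D = 2, 3 mod 4, the equation x^2 - D y^2 = -4 forces
   z to be even).  So g | 2, hence g | 1 - p (for p = 2, g is odd). *)

Section CZFactorization.
Variables (R : comPzRingType) (z z' P al al' : R).
Hypotheses (zz' : z * z' = - P ^+ 2) (trace_z'al : z' * al + z * al' = 1 - P).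

Local Notation a := (1 - z' * al).
Local Notation b := (P * al).
Local Notation c := (z' - P * al').
Local Notation a' := (1 - z * al').
Local Notation b' := (P * al').
Local Notation c' := (z - P * al).

Lemma cz_factorization :
  [/\ a * (1 - a) = b * c, a * a' + b * b' = P, a * c' + b * (1 - a') = z,
      c * a' + (1 - a) * b' = z' & c * c' + (1 - a) * (1 - a') = - P].
Proof.
have eq_mod (k1 k2 L M : R) :
    L - M = k1 * (z * z' + P ^+ 2) + k2 * (z' * al + z * al' - (1 - P)) -> L = M.
  by rewrite zz' trace_z'al addNr subrr !mulr0 addr0 => /subr0_eq.
split.
- by apply: (eq_mod (al * al') (- (z' * al))); ring.
- by apply: (eq_mod (al * al') (-1)); ring.
- by apply: (eq_mod (- al) (P * al)); ring.
- by apply: (eq_mod (- al') (P * al')); ring.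
- by apply: (eq_mod (1 + al * al') (- P)); ring.
Qed.

End CZFactorization.

(* O_D as a ring: zd_mul depends on D, so the ring structure lives on a copy
   of zd indexed by D. *)
Definition zdR (D : int) : Type := zd.

Definition zd_pair (u : zd) : int * int := (zre u, zom u).
Definition pair_zd (q : int * int) : zd := ZD q.1 q.2.
Lemma zd_pairK : cancel zd_pair pair_zd. Proof. by case. Qed.
HB.instance Definition _ D := Countable.copy (zdR D) (can_type zd_pairK).

Lemma zd_eq (u v : zd) : zre u = zre v -> zom u = zom v -> u = v.
Proof. by case: u v => [? ?] [? ?] /= -> ->. Qed.

Section ZDRingAxioms.
Variable D : int.
Local Notation mul := (zd_mul D).

Lemma zd_addA : associative zd_add.
Proof. by move=> u v w; apply: zd_eq; rewrite /= addrA. Qed.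
Lemma zd_addC : commutative zd_add.
Proof. by move=> u v; apply: zd_eq; rewrite /= addrC. Qed.
Lemma zd_add0 : left_id zd0 zd_add.
Proof. by move=> u; apply: zd_eq; rewrite /= add0r. Qed.
Lemma zd_addN : left_inverse zd0 zd_opp zd_add.
Proof. by move=> u; apply: zd_eq; rewrite /= addNr. Qed.

Lemma zd_mulA : associative mul.
Proof. by move=> u v w; apply: zd_eq; rewrite /=; ring. Qed.
Lemma zd_mulC : commutative mul.
Proof. by move=> u v; apply: zd_eq; rewrite /=; ring. Qed.
Lemma zd_mul1 : left_id zd1 mul.
Proof. by move=> u; apply: zd_eq; rewrite /=; ring. Qed.
Lemma zd_mulDl : left_distributive mul zd_add.
Proof. by move=> u v w; apply: zd_eq; rewrite /=; ring. Qed.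
Lemma zd1_neq0 : zd1 != zd0 :> zdR D. Proof. by []. Qed.

End ZDRingAxioms.

HB.instance Definition _ D :=
  GRing.isZmodule.Build (zdR D) zd_addA zd_addC zd_add0 zd_addN.
HB.instance Definition _ D := GRing.Zmodule_isComNzRing.Build (zdR D)
  (@zd_mulA D) (@zd_mulC D) (@zd_mul1 D) (@zd_mulDl D) (zd1_neq0 D).

Definition zd_trace (D : int) (u : zd) : int := 2 * zre u + zom u * wt D.

Section ZDRingFacts.
Variable D : int.
Implicit Types (u v : zdR D) (m n : int).
Local Notation conj u := (zd_conj D u : zdR D).
Local Notation "n %:D" := (zd_of_int n : zdR D) (at level 2, format "n %:D").

Lemma zdR_addE u v : u + v = zd_add u v. Proof. by []. Qed.
Lemma zdR_oppE u : - u = zd_opp u. Proof. by []. Qed.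
Lemma zdR_mulE u v : u * v = zd_mul D u v. Proof. by []. Qed.
Definition zdRE := (zdR_addE, zdR_oppE, zdR_mulE).

Lemma zd_of_intN n : (- n)%:D = - n%:D.
Proof. by apply: zd_eq. Qed.
Lemma zd_of_intB m n : (m - n)%:D = m%:D - n%:D.
Proof. by apply: zd_eq. Qed.
Lemma zd_of_intM m n : (m * n)%:D = m%:D * n%:D.
Proof. by apply: zd_eq; rewrite zdRE /=; ring. Qed.

Lemma zd_conjK : involutive (zd_conj D).
Proof. by move=> u; apply: zd_eq; rewrite /=; ring. Qed.
Lemma zd_conjB u v : conj (u - v) = conj u - conj v.
Proof. by apply: zd_eq; rewrite zdRE /=; ring. Qed.
Lemma zd_conjM u v : conj (u * v) = conj u * conj v.
Proof. by apply: zd_eq; rewrite zdRE /=; ring. Qed.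
Lemma zd_conj_int n : conj n%:D = n%:D.
Proof. by apply: zd_eq; rewrite /= ?mul0r ?addr0 ?oppr0. Qed.
Lemma zd_conj1 : conj (1 : zdR D) = 1. Proof. exact: zd_conj_int 1. Qed.

Lemma zd_mul_conj u : u * conj u = (zd_norm D u)%:D.
Proof. by apply: zd_eq; rewrite zdRE /= /zd_norm; ring. Qed.
Lemma zd_add_conj u : u + conj u = (zd_trace D u)%:D.
Proof. by apply: zd_eq; rewrite zdRE /= /zd_trace; ring. Qed.

End ZDRingFacts.

Lemma in_ideal_int (D n : int) (u : zd) :
  (n %| zre u)%Z -> (n %| zom u)%Z -> in_ideal D (zd_of_int n) u.
Proof.
case: u => x y /= /dvdzP[a ->] /dvdzP[b ->].
by exists (ZD a b); apply: zd_eq => /=; ring.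
Qed.

Lemma prime_coprimez (p : nat) (m : int) :
  prime p -> coprimez p%:Z m = ~~ (p%:Z %| m)%Z.
Proof. by move=> hp; rewrite coprimezE prime_coprime. Qed.

Lemma sqr_prime_dvdz_mul_sqr (p : nat) (d u : int) : prime p ->
  ~~ (p%:Z ^+ 2 %| d)%Z -> (p%:Z ^+ 2 %| d * u ^+ 2)%Z -> (p%:Z %| u)%Z.
Proof.
move=> hp ndvd_d; apply: contraTT => ndvd_u.
by rewrite Gauss_dvdzl // coprimezXl // coprimezXr // prime_coprimez.
Qed.

Lemma dvdz_1_sub_prime (p : nat) (g : int) : prime p -> coprimez g p%:Z ->
  (g %| 2 * p%:Z ^+ 2)%Z -> (g %| 1 - p%:Z)%Z.
Proof.
move=> hp cop; rewrite Gauss_dvdzl ?coprimezXr // => g2.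
have [p2 | odd_p] := even_prime hp; last by apply: dvdz_trans g2 _; lia.
have g1 : (g %| 1)%Z by rewrite -(Gauss_dvdzl 1 cop) mul1r p2.
exact: dvdz_trans g1 (dvd1z _).
Qed.

Definition zd_disc (D : int) : int := wt D ^+ 2 + 4 * ws D.

Lemma zd_discE D : zd_disc D = if d1mod4 D then D else 4 * D.
Proof. by rewrite /zd_disc /wt /ws /d1mod4; case: ifP => /eqP; lia. Qed.

Lemma sqr_prime_ndvdz_disc (D : int) (p : nat) : squarefree_int D -> prime p ->
  (p != 2)%N || d1mod4 D -> ~~ (p%:Z ^+ 2 %| zd_disc D)%Z.
Proof.
move=> sqD hp; have ndvd_D := sqD p (prime_gt1 hp).
rewrite zd_discE; case: d1mod4 => //=; rewrite orbF => p_neq2.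
rewrite Gauss_dvdzr // coprimezXl // prime_coprimez //.
by change (~~ (p %| 2 ^ 2)%N); rewrite Euclid_dvdX // dvdn_prime2 // andbT.
Qed.

(* Squares are 0 or 1 mod 4, while D is 2 or 3 mod 4. *)
Lemma zd_norm_m4_dvd2 (D : int) (u : zd) : squarefree_int D -> ~~ d1mod4 D ->
  zd_norm D u = -4 -> (2 %| zre u)%Z && (2 %| zom u)%Z.
Proof.
move=> sqD nd1.
have hD : (D %% 4 = 2 \/ D %% 4 = 3)%Z.
  by have := sqD 2%N isT; move: nd1; rewrite /d1mod4; lia.
rewrite /zd_norm /wt /ws (negbTE nd1) mulr0 addr0; case: u => x y /= hN.
have [j [e [Ex he]]] : exists j e, x = 2 * j + e /\ (e = 0 \/ e = 1).
  by exists (x %/ 2)%Z, (x %% 2)%Z; lia.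
have [k [f [Ey hf]]] : exists k f, y = 2 * k + f /\ (f = 0 \/ f = 1).
  by exists (y %/ 2)%Z, (y %% 2)%Z; lia.
have [q [d [ED hd]]] : exists q d, D = 4 * q + d /\ (d = 2 \/ d = 3).
  by exists (D %/ 4)%Z, (D %% 4)%Z; lia.
pose W := -1 - j ^+ 2 - j * e + (k ^+ 2 + k * f) * (4 * q + d) + f ^+ 2 * q.
have residue : e ^+ 2 - f ^+ 2 * d = 4 * W.
  by apply/subr0_eq; rewrite -(addNr 4) -hN Ex Ey ED /W; ring.
rewrite Ex Ey; move: residue; clearbody W.
by case: he => ->; case: hf => ->; case: hd => ->; lia.
Qed.

Section TraceForm.
Variables (D : int) (z : zd).
Local Notation x := (zre z).
Local Notation y := (zom z).
Local Notation w := (ZD 0 1).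
Local Notation tr u := (zd_trace D (zd_mul D (zd_conj D z) u)).

Lemma trace_form_coord m n : tr (ZD m n) = m * tr zd1 + n * tr w.
Proof. by rewrite /zd_trace /=; ring. Qed.

Lemma trace_form_self : x * tr zd1 + y * tr w = 2 * zd_norm D z.
Proof. by rewrite /zd_trace /zd_norm /=; ring. Qed.

Lemma disc_mul_re_sqr :
  zd_disc D * x ^+ 2 = tr w ^+ 2 + 4 * ws D * zd_norm D z.
Proof. by rewrite /zd_disc /zd_trace /zd_norm /=; ring. Qed.

Lemma disc_mul_om_sqr : zd_disc D * y ^+ 2 = tr zd1 ^+ 2 - 4 * zd_norm D z.
Proof. by rewrite /zd_disc /zd_trace /zd_norm /=; ring. Qed.

Lemma dvdz_coord_of_traces (p : nat) : prime p ->
  ~~ (p%:Z ^+ 2 %| zd_disc D)%Z -> (p%:Z ^+ 2 %| zd_norm D z)%Z ->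
  (p%:Z %| tr zd1)%Z -> (p%:Z %| tr w)%Z ->
  (p%:Z %| x)%Z /\ (p%:Z %| y)%Z.
Proof.
move=> hp ndisc pN p_tr1 p_trw.
split; apply: (sqr_prime_dvdz_mul_sqr hp ndisc).
- by rewrite disc_mul_re_sqr; apply: rpredD; [apply: dvdz_exp2r | apply: dvdz_mull].
- by rewrite disc_mul_om_sqr; apply: rpredB; [apply: dvdz_exp2r | apply: dvdz_mull].
Qed.

Lemma exists_trace_form_eq (p : nat) : squarefree_int D -> prime p ->
  ~ ((p%:Z %| x)%Z /\ (p%:Z %| y)%Z) -> zd_norm D z = - p%:Z ^+ 2 ->
  exists al, tr al = 1 - p%:Z.
Proof.
move=> sqD hp ndvd_z Nz.
have ndisc : ~~ (p%:Z ^+ 2 %| zd_disc D)%Z.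
  apply: sqr_prime_ndvdz_disc => //.
  case: (boolP (d1mod4 D)) => [_ | nd1]; rewrite ?orbT // orbF; apply/eqP => p2.
  have Nz4 : zd_norm D z = -4 by rewrite Nz p2.
  by apply: ndvd_z; apply/andP; rewrite p2; exact: zd_norm_m4_dvd2 sqD nd1 Nz4.
have cop : coprimez (gcdz (tr zd1) (tr w)) p%:Z.
  rewrite coprimez_sym prime_coprimez // dvdz_gcd; apply/negP => /andP[p_tr1 p_trw].
  by apply: ndvd_z; apply: dvdz_coord_of_traces; rewrite // Nz rpredN dvdzz.
have g_2p2 : (gcdz (tr zd1) (tr w) %| 2 * p%:Z ^+ 2)%Z.
  rewrite -rpredN -mulrN -Nz -trace_form_self.
  by apply: rpredD; apply: dvdz_mull; [apply: dvdz_gcdl | apply: dvdz_gcdr].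
have [k Ek] := dvdzP (dvdz_1_sub_prime hp cop g_2p2).
have [u [v Euv]] := Bezoutz (tr zd1) (tr w).
by exists (ZD (k * u) (k * v)); rewrite trace_form_coord Ek -Euv; ring.
Qed.

End TraceForm.

Theorem theorem3p6 (D : int) (p : nat) (z : zd) :
  squarefree_int D -> D != 1 ->
  prime p ->
  zd_irreducible D (zd_of_int p%:Z) -> ~ zd_prime D (zd_of_int p%:Z) ->
  I_p D p z -> zd_norm D z = - (p%:Z ^+ 2) ->
  has_CZ D (A_mat D p z).
Proof.
move=> sqD _ hp _ _ [_ [z_notin _]] Nz.
have ndvd_z : ~ ((p%:Z %| zre z)%Z /\ (p%:Z %| zom z)%Z).
  by case=> px py; apply: z_notin; apply: in_ideal_int.
have [al tr_al] := exists_trace_form_eq sqD hp ndvd_z Nz.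
pose P : zdR D := zd_of_int p%:Z.
have zz' : (z : zdR D) * zd_conj D z = - P ^+ 2.
  by rewrite zd_mul_conj Nz zd_of_intN expr2 zd_of_intM.
have tr' : (zd_conj D z : zdR D) * al + (z : zdR D) * zd_conj D al = 1 - P.
  by rewrite -{2}(zd_conjK D z) -zd_conjM zd_add_conj tr_al zd_of_intB.
have [idem e11 e12 e21 e22] := cz_factorization zz' tr'.
have NzP : zd_of_int (zd_norm D z %/ p%:Z)%Z = - P :> zdR D.
  by rewrite Nz expr2 -mulNr mulzK ?zd_of_intN // eqz_nat -lt0n prime_gt0.
exists (1 - (zd_conj D z : zdR D) * al), (P * al),
       ((zd_conj D z : zdR D) - P * zd_conj D al).
split; first exact: idem.
have conjP : zd_conj D P = P := zd_conj_int D p.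
rewrite /A_mat NzP !zd_conjB !zd_conjM !zd_conjK zd_conj1 conjP.
by congr Mat2; apply/esym.
Qed.
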